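(* Let $k:(0,\infty)\to(0,\infty)$ be such that $1/k$ is a standard operator monotone function, and let $\rho,\sigma\in M_n(\mathbb C)$ be density matrices with $\sigma$ positive definite. Then $$\|\rho-\sigma\|_1^2\le\chi^2_k(\rho,\sigma).$$
   Context: A function $g:(0,\infty)\to(0,\infty)$ is standard operator monotone if it is operator monotone, $xg(x^{-1})=g(x)$ and $g(1)=1$. For positive definite $\sigma$, $\mathbb L_\sigma X=\sigma X$, $\mathbb R_\sigma X=X\sigma$, $\mathbb J^g_\sigma=g(\mathbb L_\sigma\mathbb R_\sigma^{-1})\mathbb R_\sigma$ on $M_n(\mathbb C)$ with inner product $\langle B,C\rangle=\mathrm{Tr}\,B^*C$. The $\chi^2$-divergence is $\chi^2_k(\rho,\sigma)=\langle\rho-\sigma,(\mathbb J^{1/k}_\sigma)^{-1}(\rho-\sigma)\rangle$. $\|X\|_1=\mathrm{Tr}\,|X|$ is the trace norm. *)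

From Stdlib Require Import Reals Lra Arith.
Open Scope R_scope.

Record C := mkC { Cre : R ; Cim : R }.
Definition C0 : C := mkC 0 0.
Definition C1 : C := mkC 1 0.
Definition RtoC (r : R) : C := mkC r 0.
Definition Cadd (a b : C) : C := mkC (Cre a + Cre b) (Cim a + Cim b).
Definition Copp (a : C) : C := mkC (- Cre a) (- Cim a).
Definition Cmul (a b : C) : C :=
  mkC (Cre a * Cre b - Cim a * Cim b) (Cre a * Cim b + Cim a * Cre b).
Definition Cconj (a : C) : C := mkC (Cre a) (- Cim a).
Definition Cnorm2 (a : C) : R := Cre a * Cre a + Cim a * Cim a.

Fixpoint csum (n : nat) (f : nat -> C) : C :=
  match n with O => C0 | S m => Cadd (csum m f) (f m) end.

(** n x n complex matrices: only entries with indices < n are meaningful. *)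
Definition Mat := nat -> nat -> C.
Definition mmul (n : nat) (A B : Mat) : Mat :=
  fun i j => csum n (fun l => Cmul (A i l) (B l j)).
Definition adj (A : Mat) : Mat := fun i j => Cconj (A j i).
Definition msub (A B : Mat) : Mat := fun i j => Cadd (A i j) (Copp (B i j)).
Definition idm : Mat := fun i j => if Nat.eqb i j then C1 else C0.
Definition diagm (d : nat -> R) : Mat :=
  fun i j => if Nat.eqb i j then RtoC (d i) else C0.
Definition trace (n : nat) (A : Mat) : C := csum n (fun i => A i i).
Definition hs_inner (n : nat) (B D : Mat) : C := trace n (mmul n (adj B) D).

Definition Meq (n : nat) (A B : Mat) : Prop :=
  forall i j, (i < n)%nat -> (j < n)%nat -> A i j = B i j.
Definition hermitian (n : nat) (A : Mat) : Prop := Meq n A (adj A).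
Definition unitary (n : nat) (U : Mat) : Prop := Meq n (mmul n (adj U) U) idm.
Definition qform (n : nat) (A : Mat) (x : nat -> C) : C :=
  csum n (fun i => csum n (fun j => Cmul (Cmul (Cconj (x i)) (A i j)) (x j))).
Definition psd (n : nat) (A : Mat) : Prop :=
  hermitian n A /\ forall x : nat -> C, 0 <= Cre (qform n A x).
Definition posdef (n : nat) (A : Mat) : Prop :=
  hermitian n A /\
  forall x : nat -> C, (exists i, (i < n)%nat /\ x i <> C0) -> 0 < Cre (qform n A x).
Definition density (n : nat) (A : Mat) : Prop := psd n A /\ trace n A = C1.
Definition loewner_le (n : nat) (A B : Mat) : Prop := psd n (msub B A).

Definition spectral (n : nat) (A U : Mat) (d : nat -> R) : Prop :=
  unitary n U /\ Meq n A (mmul n (mmul n U (diagm d)) (adj U)).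
(** Functional calculus f(A) = U diag(f d) U^* for A = U diag(d) U^*. *)
Definition mfun (n : nat) (f : R -> R) (U : Mat) (d : nat -> R) : Mat :=
  mmul n (mmul n U (diagm (fun i => f (d i)))) (adj U).

Definition op_monotone (g : R -> R) : Prop :=
  forall (m : nat) (A B U V : Mat) (a b : nat -> R),
    spectral m A U a -> spectral m B V b ->
    (forall i, (i < m)%nat -> 0 < a i) -> (forall i, (i < m)%nat -> 0 < b i) ->
    loewner_le m A B -> loewner_le m (mfun m g U a) (mfun m g V b).

Definition standard_op_monotone (g : R -> R) : Prop :=
  (forall x, 0 < x -> 0 < g x) /\ op_monotone g /\
  (forall x, 0 < x -> x * g (/ x) = g x) /\ g 1 = 1.

(** Trace norm ||X||_1 = Tr |X| = Tr sqrt(X^* X), computed through a spectral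
    decomposition X^* X = W diag(mu) W^*. *)
Definition trace_norm_via (n : nat) (W : Mat) (mu : nat -> R) : R :=
  Cre (trace n (mfun n sqrt W mu)).

(** With sigma = U diag(lam) U^*, the
    matrices U E_ij U^* form an orthonormal eigenbasis (Hilbert-Schmidt) of the
    commuting positive superoperators L_sigma R_sigma^{-1} (eigenvalue
    lam_i/lam_j) and R_sigma (eigenvalue lam_j).  Hence a superoperator function
    F(L R^{-1}, R) acts as X |-> U [ F(lam_i/lam_j, lam_j) (U^* X U)_ij ] U^*. *)
Definition superop_fun (n : nat) (U : Mat) (mu : nat -> nat -> R) (X : Mat) : Mat :=
  let Y := mmul n (mmul n (adj U) X) U in
  mmul n (mmul n U (fun i j => Cmul (RtoC (mu i j)) (Y i j))) (adj U).

(** J^g_sigma = g(L R^{-1}) R *)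
Definition Jop (n : nat) (g : R -> R) (U : Mat) (lam : nat -> R) : Mat -> Mat :=
  superop_fun n U (fun i j => g (lam i / lam j) * lam j).
Definition Jop_inv (n : nat) (g : R -> R) (U : Mat) (lam : nat -> R) : Mat -> Mat :=
  superop_fun n U (fun i j => / (g (lam i / lam j) * lam j)).

Definition chi2 (n : nat) (k : R -> R) (U : Mat) (lam : nat -> R) (rho sigma : Mat) : C :=
  hs_inner n (msub rho sigma) (Jop_inv n (fun x => / k x) U lam (msub rho sigma)).

From Stdlib Require Import Reals Lra Lia Psatz Setoid Morphisms Ring Classical_Prop.
Open Scope R_scope.

(* Write [X = rho - sigma] and [sigma = U diag(lam) U^*].  Operator monotonicity of
   [g = 1/k] in dimension 2 makes [g] concave, which together with [g x = x g(1/x)] and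
   [g 1 = 1] gives [g x <= (1 + x)/2].  Hence, with [Y = U^* X U],
   [chi^2_k = sum_ab |Y_ab|^2 / (g(lam_a/lam_b) lam_b) >= sum_ab |Y_ab|^2 / ((lam_a+lam_b)/2)].
   The polar decomposition writes [||X||_1 = Re Tr (V X)] with [V] a partial isometry, so
   [T = U^* V U] has rows and columns of norm at most 1, and [sum_ab (lam_a+lam_b)/2 |T_ba|^2
   <= Tr sigma = 1].  Cauchy-Schwarz with the weights [(lam_a+lam_b)/2] concludes. *)

Definition Csub (a b : C) : C := Cadd a (Copp b).

Lemma C_ext (a b : C) : Cre a = Cre b -> Cim a = Cim b -> a = b.
Proof. destruct a, b; simpl; intros; subst; reflexivity. Qed.

Lemma C_ring_theory : ring_theory C0 C1 Cadd Cmul Csub Copp (@eq C).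
Proof.
  constructor; intros; apply C_ext; destruct x; try destruct y; try destruct z;
    unfold Cadd, Cmul, Csub, Copp, C0, C1; simpl; ring.
Qed.
Add Ring C_ring : C_ring_theory.

Lemma Cconj_add a b : Cconj (Cadd a b) = Cadd (Cconj a) (Cconj b).
Proof. apply C_ext; simpl; ring. Qed.
Lemma Cconj_mul a b : Cconj (Cmul a b) = Cmul (Cconj a) (Cconj b).
Proof. apply C_ext; simpl; ring. Qed.
Lemma Cconj_involutive a : Cconj (Cconj a) = a.
Proof. apply C_ext; simpl; ring. Qed.
Lemma Cconj_0 : Cconj C0 = C0.
Proof. apply C_ext; simpl; ring. Qed.

Lemma Cnorm2_nonneg a : 0 <= Cnorm2 a.
Proof. unfold Cnorm2. nra. Qed.
Lemma Cnorm2_le0 a : Cnorm2 a <= 0 -> a = C0.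
Proof. destruct a as [x y]; unfold Cnorm2; simpl; intros H. apply C_ext; simpl; nra. Qed.

Lemma two_Re_mul_le (y t : C) c : 0 < c -> 2 * Cre (Cmul y t) <= c * Cnorm2 t + Cnorm2 y / c.
Proof.
  intros Hc. destruct y as [y1 y2], t as [t1 t2]. unfold Cnorm2; simpl.
  assert (Hsq : 0 <= (c * t1 - y1) ^ 2 + (c * t2 + y2) ^ 2)
    by (apply Rplus_le_le_0_compat; apply pow2_ge_0).
  assert (E : c * (c * (t1 * t1 + t2 * t2) + (y1 * y1 + y2 * y2) / c - 2 * (y1 * t1 - y2 * t2))
              = (c * t1 - y1) ^ 2 + (c * t2 + y2) ^ 2) by (field; lra).
  assert (0 <= c * (t1 * t1 + t2 * t2) + (y1 * y1 + y2 * y2) / c - 2 * (y1 * t1 - y2 * t2))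
    by (apply (Rmult_le_reg_l c); lra).
  lra.
Qed.

Fixpoint rsum (n : nat) (f : nat -> R) : R :=
  match n with O => 0 | S m => rsum m f + f m end.

Lemma csum_ext n f g : (forall i, (i < n)%nat -> f i = g i) -> csum n f = csum n g.
Proof. induction n; simpl; intros H; auto. rewrite IHn, H; auto. Qed.
Lemma rsum_ext n f g : (forall i, (i < n)%nat -> f i = g i) -> rsum n f = rsum n g.
Proof. induction n; simpl; intros H; auto. rewrite IHn, H; auto. Qed.
Lemma csum_add n f g : csum n (fun i => Cadd (f i) (g i)) = Cadd (csum n f) (csum n g).
Proof. induction n; simpl. apply C_ext; simpl; ring. rewrite IHn. ring. Qed.
Lemma csum_mul_l n c f : Cmul c (csum n f) = csum n (fun i => Cmul c (f i)).
Proof. induction n; simpl. apply C_ext; simpl; ring. rewrite <- IHn. ring. Qed.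
Lemma csum_mul_r n c f : Cmul (csum n f) c = csum n (fun i => Cmul (f i) c).
Proof. induction n; simpl. apply C_ext; simpl; ring. rewrite <- IHn. ring. Qed.
Lemma csum_conj n f : Cconj (csum n f) = csum n (fun i => Cconj (f i)).
Proof. induction n; simpl. apply Cconj_0. rewrite Cconj_add, IHn. reflexivity. Qed.
Lemma csum_zero n : csum n (fun _ => C0) = C0.
Proof. induction n; simpl; auto. rewrite IHn. ring. Qed.
Lemma csum_swap n m f :
  csum n (fun i => csum m (fun j => f i j)) = csum m (fun j => csum n (fun i => f i j)).
Proof. induction n; simpl. rewrite csum_zero; auto. rewrite IHn, <- csum_add. reflexivity. Qed.
Lemma csum_delta n i f : (i < n)%nat ->
  csum n (fun l => if Nat.eqb i l then f l else C0) = f i.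
Proof.
  induction n; intros Hi; [lia|]. simpl.
  destruct (Nat.eqb i n) eqn:E.
  - apply Nat.eqb_eq in E; subst.
    rewrite (csum_ext _ _ (fun _ => C0)), csum_zero; [ring|].
    intros l Hl. destruct (Nat.eqb n l) eqn:E2; auto. apply Nat.eqb_eq in E2; lia.
  - apply Nat.eqb_neq in E. rewrite IHn by lia. ring.
Qed.
Lemma Cre_csum n f : Cre (csum n f) = rsum n (fun i => Cre (f i)).
Proof. induction n; simpl; auto. rewrite IHn; auto. Qed.
Lemma Cim_csum n f : Cim (csum n f) = rsum n (fun i => Cim (f i)).
Proof. induction n; simpl; auto. rewrite IHn; auto. Qed.

Lemma rsum_add n f g : rsum n (fun i => f i + g i) = rsum n f + rsum n g.
Proof. induction n; simpl. ring. rewrite IHn. ring. Qed.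
Lemma rsum_scal n c f : rsum n (fun i => c * f i) = c * rsum n f.
Proof. induction n; simpl. ring. rewrite IHn. ring. Qed.
Lemma rsum_const n c : rsum n (fun _ => c) = INR n * c.
Proof. induction n; simpl rsum. simpl; ring. rewrite IHn, S_INR. ring. Qed.
Lemma rsum_swap n m f :
  rsum n (fun i => rsum m (fun j => f i j)) = rsum m (fun j => rsum n (fun i => f i j)).
Proof.
  induction n; simpl. rewrite rsum_const; ring.
  rewrite IHn, <- rsum_add. reflexivity.
Qed.
Lemma rsum_le n f g : (forall i, (i < n)%nat -> f i <= g i) -> rsum n f <= rsum n g.
Proof.
  induction n; simpl; intros H; [lra|].
  assert (f n <= g n) by auto. assert (rsum n f <= rsum n g) by auto. lra.
Qed.
Lemma rsum_nonneg n f : (forall i, (i < n)%nat -> 0 <= f i) -> 0 <= rsum n f.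
Proof.
  intros H. replace 0 with (rsum n (fun _ => 0)) by (rewrite rsum_const; ring).
  apply rsum_le; auto.
Qed.
Lemma rsum_ge_term n f i : (forall l, (l < n)%nat -> 0 <= f l) -> (i < n)%nat ->
  f i <= rsum n f.
Proof.
  induction n; intros H Hi; [lia|]. simpl.
  destruct (Nat.eq_dec i n).
  - subst. assert (0 <= rsum n f) by (apply rsum_nonneg; auto). lra.
  - assert (f i <= rsum n f) by (apply IHn; auto; lia). assert (0 <= f n) by auto. lra.
Qed.
Lemma rsum_ge_two_terms n f i l : (forall m, (m < n)%nat -> 0 <= f m) ->
  (i < n)%nat -> (l < n)%nat -> i <> l -> f i + f l <= rsum n f.
Proof.
  induction n; intros H Hi Hl Hil; [lia|]. simpl.
  assert (0 <= f n) by auto.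
  destruct (Nat.eq_dec i n); [subst; assert (f l <= rsum n f) by (apply rsum_ge_term; auto; lia); lra|].
  destruct (Nat.eq_dec l n); [subst; assert (f i <= rsum n f) by (apply rsum_ge_term; auto; lia); lra|].
  assert (f i + f l <= rsum n f) by (apply IHn; auto; lia). lra.
Qed.
Lemma rsum_le1_eq1 n f : (forall i, (i < n)%nat -> f i <= 1) -> INR n <= rsum n f ->
  forall i, (i < n)%nat -> f i = 1.
Proof.
  induction n; intros H Hs i Hi; [lia|].
  assert (rsum n f <= INR n).
  { replace (INR n) with (rsum n (fun _ => 1)) by (rewrite rsum_const; ring). apply rsum_le; auto. }
  simpl rsum in Hs. rewrite S_INR in Hs. assert (f n <= 1) by auto.
  destruct (Nat.eq_dec i n); [subst; lra|].
  apply IHn; auto; [lra|lia].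
Qed.

Lemma Meq_refl n A : Meq n A A. Proof. intros i j _ _; reflexivity. Qed.
Lemma Meq_sym n A B : Meq n A B -> Meq n B A. Proof. intros H i j Hi Hj; symmetry; auto. Qed.
Lemma Meq_trans n A B D : Meq n A B -> Meq n B D -> Meq n A D.
Proof. intros H1 H2 i j Hi Hj; rewrite H1; auto. Qed.
Add Parametric Relation n : Mat (Meq n)
  reflexivity proved by (Meq_refl n) symmetry proved by (Meq_sym n)
  transitivity proved by (Meq_trans n) as Meq_rel.

Add Parametric Morphism n : (mmul n) with signature Meq n ==> Meq n ==> Meq n as mmul_mor.
Proof.
  intros A A' HA B B' HB i j Hi Hj. unfold mmul. apply csum_ext; intros l Hl. rewrite HA, HB; auto.
Qed.
Add Parametric Morphism n : adj with signature Meq n ==> Meq n as adj_mor.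
Proof. intros A A' HA i j Hi Hj. unfold adj. rewrite HA; auto. Qed.
Add Parametric Morphism n : (trace n) with signature Meq n ==> eq as trace_mor.
Proof. intros A A' HA. unfold trace. apply csum_ext; intros; auto. Qed.

Lemma mmul_assoc n A B D : Meq n (mmul n (mmul n A B) D) (mmul n A (mmul n B D)).
Proof.
  intros i j _ _. unfold mmul.
  transitivity (csum n (fun l => csum n (fun m => Cmul (Cmul (A i m) (B m l)) (D l j)))).
  - apply csum_ext; intros; apply csum_mul_r.
  - rewrite csum_swap. apply csum_ext; intros m _. rewrite csum_mul_l.
    apply csum_ext; intros; ring.
Qed.
Lemma adj_mmul n A B : Meq n (adj (mmul n A B)) (mmul n (adj B) (adj A)).
Proof.
  intros i j _ _. unfold adj, mmul. rewrite csum_conj.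
  apply csum_ext; intros. rewrite Cconj_mul. ring.
Qed.
Lemma adj_involutive n A : Meq n (adj (adj A)) A.
Proof. intros i j _ _. apply Cconj_involutive. Qed.
Lemma trace_mmul_comm n A B : trace n (mmul n A B) = trace n (mmul n B A).
Proof.
  unfold trace, mmul. rewrite csum_swap.
  apply csum_ext; intros; apply csum_ext; intros; ring.
Qed.

Lemma mmul_idm_l n A : Meq n (mmul n idm A) A.
Proof.
  intros i j Hi _. unfold mmul, idm.
  rewrite <- (csum_delta n i (fun l => A l j)) by auto.
  apply csum_ext; intros l _. destruct (Nat.eqb i l); apply C_ext; simpl; ring.
Qed.
Lemma mmul_idm_r n A : Meq n (mmul n A idm) A.
Proof.
  intros i j _ Hj. unfold mmul, idm.
  rewrite <- (csum_delta n j (fun l => A i l)) by auto.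
  apply csum_ext; intros l _. rewrite (Nat.eqb_sym l j).
  destruct (Nat.eqb j l); apply C_ext; simpl; ring.
Qed.
Lemma mmul_diagm_r n A d : Meq n (mmul n A (diagm d)) (fun i j => Cmul (A i j) (RtoC (d j))).
Proof.
  intros i j _ Hj. unfold mmul, diagm.
  rewrite <- (csum_delta n j (fun l => Cmul (A i l) (RtoC (d l)))) by auto.
  apply csum_ext; intros l _. rewrite (Nat.eqb_sym l j).
  destruct (Nat.eqb j l); auto. apply C_ext; simpl; ring.
Qed.
Lemma diagm_ext n a b : (forall i, (i < n)%nat -> a i = b i) -> Meq n (diagm a) (diagm b).
Proof. intros H i j Hi Hj. unfold diagm. rewrite H; auto. Qed.
Lemma diagm_mul n a b : Meq n (mmul n (diagm a) (diagm b)) (diagm (fun i => a i * b i)).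
Proof.
  rewrite mmul_diagm_r. intros i j _ _. unfold diagm.
  destruct (Nat.eqb i j) eqn:E; [apply Nat.eqb_eq in E; subst|]; apply C_ext; simpl; ring.
Qed.
Lemma adj_diagm n d : Meq n (adj (diagm d)) (diagm d).
Proof.
  intros i j _ _. unfold adj, diagm. rewrite Nat.eqb_sym.
  destruct (Nat.eqb i j) eqn:E; [apply Nat.eqb_eq in E; subst|]; apply C_ext; simpl; ring.
Qed.
Lemma trace_diagm n d : trace n (diagm d) = RtoC (rsum n d).
Proof.
  unfold trace, diagm. induction n; simpl; [reflexivity|].
  rewrite Nat.eqb_refl, IHn. apply C_ext; simpl; ring.
Qed.
Lemma trace_idm n : Cre (trace n idm) = INR n.
Proof.
  unfold trace, idm. rewrite Cre_csum, (rsum_ext _ _ (fun _ => 1)), rsum_const; [ring|].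
  intros; rewrite Nat.eqb_refl; reflexivity.
Qed.
Lemma trace_conj_diagm n W d : unitary n W ->
  trace n (mmul n (mmul n W (diagm d)) (adj W)) = RtoC (rsum n d).
Proof.
  intros HW. rewrite trace_mmul_comm, <- mmul_assoc. unfold unitary in HW.
  rewrite HW, mmul_idm_l. apply trace_diagm.
Qed.

Definition orth_proj (n : nat) (P : Mat) : Prop :=
  hermitian n P /\ Meq n (mmul n P P) P.

Add Parametric Morphism n : (orth_proj n) with signature Meq n ==> iff as orth_proj_mor.
Proof. intros P P' HP. unfold orth_proj, hermitian. rewrite HP. reflexivity. Qed.

Lemma hermitian_entry n P i l : hermitian n P -> (i < n)%nat -> (l < n)%nat ->
  P l i = Cconj (P i l).
Proof. intros H Hi Hl. rewrite H by auto. reflexivity. Qed.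

Lemma orth_proj_diag n P i : orth_proj n P -> (i < n)%nat ->
  Cim (P i i) = 0 /\ Cre (P i i) = rsum n (fun l => Cnorm2 (P i l)).
Proof.
  intros [Hh Hp] Hi. rewrite <- (Hp i i) by auto. unfold mmul.
  rewrite Cre_csum, Cim_csum. split.
  - rewrite (rsum_ext _ _ (fun _ => 0)), rsum_const; [ring|].
    intros l Hl. rewrite (hermitian_entry n P i l) by auto. simpl. ring.
  - apply rsum_ext. intros l Hl. rewrite (hermitian_entry n P i l) by auto.
    unfold Cnorm2; simpl. ring.
Qed.

(* [P_ii = sum_l |P_il|^2 >= |P_ii|^2] with [P_ii] real. *)
Lemma orth_proj_diag_le1 n P i : orth_proj n P -> (i < n)%nat -> Cre (P i i) <= 1.
Proof.
  intros HP Hi. destruct (orth_proj_diag n P i HP Hi) as [Him Hre].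
  assert (Cnorm2 (P i i) <= rsum n (fun l => Cnorm2 (P i l))).
  { apply (rsum_ge_term n (fun l => Cnorm2 (P i l))); auto. intros; apply Cnorm2_nonneg. }
  rewrite <- Hre in H. unfold Cnorm2 in H. rewrite Him in H. nra.
Qed.

Lemma orth_proj_gram_row_le1 n A i : orth_proj n (mmul n A (adj A)) -> (i < n)%nat ->
  rsum n (fun l => Cnorm2 (A i l)) <= 1.
Proof.
  intros HP Hi. pose proof (orth_proj_diag_le1 n _ i HP Hi) as H.
  unfold mmul at 1 in H. rewrite Cre_csum in H. erewrite rsum_ext; [exact H|].
  intros l _. unfold adj, Cnorm2. simpl. ring.
Qed.

Lemma orth_proj_gram_col_le1 n A j : orth_proj n (mmul n (adj A) A) -> (j < n)%nat ->
  rsum n (fun l => Cnorm2 (A l j)) <= 1.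
Proof.
  intros HP Hj. pose proof (orth_proj_diag_le1 n _ j HP Hj) as H.
  unfold mmul at 1 in H. rewrite Cre_csum in H. erewrite rsum_ext; [exact H|].
  intros l _. unfold adj, Cnorm2. simpl. ring.
Qed.

Lemma orth_proj_full_trace n P : orth_proj n P -> Cre (trace n P) = INR n -> Meq n P idm.
Proof.
  intros HP Ht.
  assert (H1 : forall i, (i < n)%nat -> Cre (P i i) = 1).
  { apply (rsum_le1_eq1 n (fun i => Cre (P i i))).
    - intros i Hi. apply (orth_proj_diag_le1 n); auto.
    - unfold trace in Ht. rewrite Cre_csum in Ht. lra. }
  intros i l Hi Hl. destruct (orth_proj_diag n P i HP Hi) as [Him Hre].
  rewrite H1 in Hre by auto. unfold idm.
  destruct (Nat.eqb i l) eqn:E.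
  - apply Nat.eqb_eq in E; subst. apply C_ext; simpl; auto.
  - apply Nat.eqb_neq in E. apply Cnorm2_le0.
    assert (Cnorm2 (P i i) + Cnorm2 (P i l) <= rsum n (fun l => Cnorm2 (P i l))).
    { apply (rsum_ge_two_terms n (fun l => Cnorm2 (P i l))); auto. intros; apply Cnorm2_nonneg. }
    unfold Cnorm2 at 1 in H. rewrite Him, H1 in H by auto. lra.
Qed.

(* [U U^*] is an orthogonal projection of trace [Tr (U^* U) = n]. *)
Lemma unitary_mmul_adj n U : unitary n U -> Meq n (mmul n U (adj U)) idm.
Proof.
  intros HU. unfold unitary in HU. apply orth_proj_full_trace.
  - split.
    + unfold hermitian. rewrite adj_mmul, adj_involutive. reflexivity.
    + rewrite mmul_assoc, <- (mmul_assoc n (adj U) U (adj U)), HU, mmul_idm_l. reflexivity.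
  - rewrite trace_mmul_comm, HU. apply trace_idm.
Qed.

Lemma orth_proj_conj n Q P : Meq n (mmul n (adj Q) Q) idm -> orth_proj n P ->
  orth_proj n (mmul n (mmul n Q P) (adj Q)).
Proof.
  intros HQ [Hh Hp]. unfold hermitian in Hh. split.
  - unfold hermitian. rewrite adj_mmul, adj_involutive, adj_mmul, <- Hh, mmul_assoc. reflexivity.
  - rewrite !mmul_assoc, <- (mmul_assoc n (adj Q) Q), HQ, mmul_idm_l, <- (mmul_assoc n P P), Hp.
    reflexivity.
Qed.

Lemma qform_column n A U a : qform n A (fun i => U i a) = mmul n (mmul n (adj U) A) U a a.
Proof.
  unfold qform, mmul, adj.
  transitivity (csum n (fun j => csum n (fun i => Cmul (Cmul (Cconj (U i a)) (A i j)) (U j a)))).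
  - apply csum_swap.
  - apply csum_ext; intros j _. rewrite csum_mul_r. reflexivity.
Qed.

Lemma spectral_diagonalize n A U d : spectral n A U d ->
  Meq n (mmul n (mmul n (adj U) A) U) (diagm d).
Proof.
  intros [HU Hs]. unfold unitary in HU.
  rewrite Hs, !mmul_assoc, HU, mmul_idm_r, <- mmul_assoc, HU, mmul_idm_l. reflexivity.
Qed.

Lemma spectral_posdef_pos n A U d : posdef n A -> spectral n A U d ->
  forall a, (a < n)%nat -> 0 < d a.
Proof.
  intros [_ Hpd] Hsp a Ha.
  assert (Hq : Cre (qform n A (fun i => U i a)) = d a).
  { rewrite qform_column, (spectral_diagonalize n A U d Hsp a a Ha Ha). unfold diagm.
    rewrite Nat.eqb_refl. reflexivity. }
  rewrite <- Hq. apply Hpd.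
  (* a column of a unitary matrix has norm 1, so it is not zero *)
  apply NNPP; intros Hnz. destruct Hsp as [HU _].
  assert (Hz : mmul n (adj U) U a a = C0).
  { unfold mmul. rewrite <- (csum_zero n). apply csum_ext; intros i Hi.
    destruct (classic (U i a = C0)) as [E|E].
    - unfold adj. rewrite E. apply C_ext; simpl; ring.
    - exfalso; apply Hnz; eauto. }
  rewrite HU in Hz by auto. unfold idm in Hz. rewrite Nat.eqb_refl in Hz.
  injection Hz. lra.
Qed.

Lemma spectral_trace n A U d : spectral n A U d -> trace n A = RtoC (rsum n d).
Proof. intros [HU Hs]. rewrite Hs. apply trace_conj_diagm; auto. Qed.

(** * Standard operator monotone functions lie below the arithmetic mean *)

Lemma qform_basis n M i : (i < n)%nat ->
  qform n M (fun l => if Nat.eqb i l then C1 else C0) = M i i.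
Proof.
  intros Hi. unfold qform.
  rewrite <- (csum_delta n i (fun a => M a i)) by auto.
  apply csum_ext; intros a Ha.
  transitivity (Cmul (Cconj (if Nat.eqb i a then C1 else C0)) (M a i)).
  - rewrite <- (csum_delta n i (fun b => Cmul (Cconj (if Nat.eqb i a then C1 else C0)) (M a b)))
      by auto.
    apply csum_ext; intros b _. destruct (Nat.eqb i b); apply C_ext; simpl; ring.
  - destruct (Nat.eqb i a) eqn:E; [apply Nat.eqb_eq in E; subst|]; apply C_ext; simpl; ring.
Qed.

Lemma psd_diag_nonneg n M i : psd n M -> (i < n)%nat -> 0 <= Cre (M i i).
Proof. intros [_ Hq] Hi. rewrite <- (qform_basis n M i Hi). apply Hq. Qed.

Lemma psd_2x2_real M al ga de :
  M 0%nat 0%nat = RtoC al -> M 1%nat 1%nat = RtoC ga ->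
  M 0%nat 1%nat = RtoC de -> M 1%nat 0%nat = RtoC de ->
  0 < al -> de * de <= al * ga -> psd 2 M.
Proof.
  intros H00 H11 H01 H10 Hal Hd. split.
  - intros i j Hi Hj. unfold adj.
    destruct i as [|[|i]]; destruct j as [|[|j]]; try lia;
      rewrite ?H00, ?H11, ?H01, ?H10; apply C_ext; simpl; ring.
  - intros x. unfold qform. simpl. rewrite H00, H11, H01, H10. simpl.
    destruct (x 0%nat) as [a b]; destruct (x 1%nat) as [c d]; simpl.
    assert (0 <= (al * ga - de * de) * (c * c + d * d)) by (apply Rmult_le_pos; nra).
    assert (0 <= (al * a + de * c) ^ 2 + (al * b + de * d) ^ 2)
      by (apply Rplus_le_le_0_compat; apply pow2_ge_0).
    assert (0 <= al * (al * (a * a + b * b) + ga * (c * c + d * d) + 2 * de * (a * c + b * d))).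
    { replace (al * (al * (a * a + b * b) + ga * (c * c + d * d) + 2 * de * (a * c + b * d))) with
        ((al * a + de * c) ^ 2 + (al * b + de * d) ^ 2 + (al * ga - de * de) * (c * c + d * d))
        by ring.
      lra. }
    assert (0 <= al * (a * a + b * b) + ga * (c * c + d * d) + 2 * de * (a * c + b * d))
      by (apply (Rmult_le_reg_l al); lra).
    nra.
Qed.

Lemma spectral_diagm m d : spectral m (diagm d) idm d.
Proof.
  assert (Hid : Meq m (adj idm) idm) by exact (adj_diagm m (fun _ => 1)).
  split.
  - unfold unitary. rewrite Hid. apply mmul_idm_l.
  - rewrite Hid, mmul_idm_l, mmul_idm_r. reflexivity.
Qed.

Lemma op_monotone_monotone g : op_monotone g -> forall a b, 0 < a -> a <= b -> g a <= g b.
Proof.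
  intros Hg a b Ha Hab.
  assert (Hl : loewner_le 1 (diagm (fun _ => a)) (diagm (fun _ => b))).
  { split.
    - intros i j Hi Hj. destruct i; [|lia]. destruct j; [|lia]. apply C_ext; simpl; ring.
    - intros x. unfold qform, msub, diagm; simpl. destruct (x 0%nat) as [u v]; simpl. nra. }
  pose proof (Hg 1%nat _ _ _ _ _ _ (spectral_diagm 1 (fun _ => a)) (spectral_diagm 1 (fun _ => b))
    (fun _ _ => Ha) (fun _ _ => ltac:(lra)) Hl) as H.
  apply psd_diag_nonneg with (i := 0%nat) in H; [|lia].
  unfold mfun, msub, mmul, adj, diagm, idm in H. simpl in H. lra.
Qed.

Definition rot2 (s s' : R) : Mat := fun i j =>
  match i, j with
  | 0%nat, 0%nat => RtoC s | 0%nat, 1%nat => RtoC s' | 1%nat, 0%nat => RtoC s'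
  | 1%nat, 1%nat => RtoC (- s) | _, _ => C0 end.
Definition diag2 (p q : R) : nat -> R := fun i => match i with 0%nat => p | _ => q end.

Lemma unitary_rot2 s s' : s * s + s' * s' = 1 -> unitary 2 (rot2 s s').
Proof.
  intros H i j Hi Hj.
  destruct i as [|[|i]]; destruct j as [|[|j]]; try lia;
    apply C_ext; unfold mmul, adj, rot2, idm; simpl; nra.
Qed.

(* [A := R diag(p,q) R^*] with [R = rot2 s s'] lies below [diag(b)]: the off-diagonal
   entry [ss'(p-q)] of the difference is absorbed by [e] and [(ss'(p-q))^2/e] on the
   diagonal.  The (0,0) entry of [g A <= g (diag b)] is the claim. *)
Lemma op_monotone_concave2 g : op_monotone g -> forall s s' p q e,
  s * s + s' * s' = 1 -> 0 < p -> 0 < q -> 0 < e ->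
  s * s * g p + s' * s' * g q <= g (s * s * p + s' * s' * q + e).
Proof.
  intros Hg s s' p q e Hs Hp Hq He.
  set (A := mmul 2 (mmul 2 (rot2 s s') (diagm (diag2 p q))) (adj (rot2 s s'))).
  set (de := s * s' * (p - q)).
  set (b := diag2 (s * s * p + s' * s' * q + e) (s' * s' * p + s * s * q + de * de / e)).
  assert (HsA : spectral 2 A (rot2 s s') (diag2 p q)) by (split; [apply unitary_rot2|]; auto; reflexivity).
  assert (Hl : loewner_le 2 A (diagm b)).
  { apply (psd_2x2_real _ e (de * de / e) (- de)).
    all: try (apply C_ext; unfold msub, A, b, de, diag2, diagm, mmul, adj, rot2; simpl).
    all: try (field; lra). all: try ring.
    auto. apply Req_le. field. lra. }
  assert (Hb : forall i, (i < 2)%nat -> 0 < b i).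
  { assert (0 <= de * de / e) by (apply Rmult_le_pos; [nra | left; apply Rinv_0_lt_compat; lra]).
    assert (0 <= s * s * p) by (apply Rmult_le_pos; nra).
    assert (0 <= s' * s' * q) by (apply Rmult_le_pos; nra).
    assert (0 < s' * s' * p + s * s * q).
    { destruct (Rle_lt_dec (s * s) 0); [assert (s' * s' = 1) by nra; nra|].
      assert (0 < s * s * q) by (apply Rmult_lt_0_compat; lra). nra. }
    intros i Hi. unfold b, diag2. destruct i; lra. }
  pose proof (Hg 2%nat A (diagm b) (rot2 s s') idm (diag2 p q) b HsA (spectral_diagm _ _)
     (fun i _ => ltac:(destruct i; simpl; lra)) Hb Hl) as H.
  apply psd_diag_nonneg with (i := 0%nat) in H; [|lia].
  unfold mfun, msub, mmul, adj, diagm, idm, rot2, b, diag2 in H. simpl in H. nra.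
Qed.

(* Concavity at the weights [x/(x+1)], [1/(x+1)] and the points [1/x], [x] gives
   [2 g(x)/(x+1) <= g(1+e)], and [g(1+e) = (1+e) g(1/(1+e)) <= 1+e]. *)
Lemma standard_op_monotone_le_mean g : standard_op_monotone g ->
  forall x, 0 < x -> g x <= (1 + x) / 2.
Proof.
  intros [Hpos [Hmon [Hsym H1]]] x Hx.
  set (L := 2 * g x / (x + 1)).
  assert (Hall : forall e, 0 < e -> L <= 1 + e).
  { intros e He.
    set (s := sqrt (x / (x + 1))). set (s' := sqrt (/ (x + 1))).
    assert (Hss : s * s = x / (x + 1)) by (apply sqrt_sqrt, Rlt_le, Rdiv_lt_0_compat; lra).
    assert (Hss' : s' * s' = / (x + 1)) by (apply sqrt_sqrt, Rlt_le, Rinv_0_lt_compat; lra).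
    assert (Hs : s * s + s' * s' = 1) by (rewrite Hss, Hss'; field; lra).
    pose proof (op_monotone_concave2 g Hmon s s' (/ x) x e Hs (Rinv_0_lt_compat _ Hx) Hx He) as Hc.
    rewrite Hss, Hss' in Hc.
    replace (x / (x + 1) * / x + / (x + 1) * x + e) with (1 + e) in Hc by (field; lra).
    assert (Hgx : g (/ x) = g x / x) by (rewrite <- (Hsym x Hx); field; lra).
    rewrite Hgx in Hc.
    replace (x / (x + 1) * (g x / x) + / (x + 1) * g x) with L in Hc by (unfold L; field; lra).
    assert (Hge : g (1 + e) <= 1 + e).
    { rewrite <- (Hsym (1 + e)) by lra.
      assert (g (/ (1 + e)) <= g 1).
      { apply op_monotone_monotone; auto; [apply Rinv_0_lt_compat; lra|].
        rewrite <- Rinv_1. apply Rinv_le_contravar; lra. }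
      rewrite H1 in H. nra. }
    lra. }
  assert (L <= 1) by (destruct (Rle_lt_dec L 1); auto; specialize (Hall ((L - 1) / 2)); lra).
  unfold L in H. apply (Rmult_le_compat_r ((x + 1) / 2)) in H; [|lra].
  replace (2 * g x / (x + 1) * ((x + 1) / 2)) with (g x) in H by (field; lra). lra.
Qed.

(** * Polar decomposition and the trace norm *)

Lemma trace_norm_via_eq n W mu : unitary n W ->
  trace_norm_via n W mu = rsum n (fun i => sqrt (mu i)).
Proof. intros HW. unfold trace_norm_via, mfun. rewrite trace_conj_diagm by auto. reflexivity. Qed.

(* [S := Z diag(c)] with [c_i = mu_i^(-1/2)] on the support of [mu] (and [0] off it)
   is a partial isometry, and [S^* Z = diag(sqrt mu)]. *)
Lemma gram_diagm_partial_isometry n Z mu : Meq n (mmul n (adj Z) Z) (diagm mu) ->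
  exists S, orth_proj n (mmul n (adj S) S) /\ orth_proj n (mmul n S (adj S)) /\
    Cre (trace n (mmul n (adj S) Z)) = rsum n (fun i => sqrt (mu i)).
Proof.
  intros HZ.
  set (c := fun i => if Rlt_dec 0 (mu i) then / sqrt (mu i) else 0).
  set (e := fun i => if Rlt_dec 0 (mu i) then 1 else 0).
  assert (Hsq : forall i, 0 < mu i -> sqrt (mu i) * sqrt (mu i) = mu i /\ sqrt (mu i) <> 0).
  { intros i Hi. split; [apply sqrt_sqrt; lra | apply Rgt_not_eq, sqrt_lt_R0; lra]. }
  set (S := mmul n Z (diagm c)). exists S.
  assert (HSS : Meq n (mmul n (adj S) S) (diagm e)).
  { unfold S. rewrite adj_mmul, adj_diagm, !mmul_assoc, <- (mmul_assoc n (adj Z) Z), HZ, !diagm_mul.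
    apply diagm_ext. intros i _. unfold c, e.
    destruct (Rlt_dec 0 (mu i)) as [Hi|]; [|ring].
    destruct (Hsq i Hi) as [Hq Hnz]. rewrite <- Hq at 2. field; auto. }
  assert (HSe : Meq n (mmul n S (diagm e)) S).
  { unfold S. rewrite mmul_assoc, diagm_mul, (diagm_ext n _ c); [reflexivity|].
    intros i _. unfold c, e. destruct (Rlt_dec 0 (mu i)); ring. }
  split; [|split].
  - split.
    + unfold hermitian. rewrite HSS, adj_diagm. reflexivity.
    + rewrite HSS, diagm_mul. apply diagm_ext. intros i _. unfold e.
      destruct (Rlt_dec 0 (mu i)); ring.
  - split.
    + unfold hermitian. rewrite adj_mmul, adj_involutive. reflexivity.
    + rewrite !mmul_assoc, <- (mmul_assoc n (adj S) S), HSS, <- mmul_assoc, HSe.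
      reflexivity.
  - unfold S. rewrite adj_mmul, adj_diagm, mmul_assoc, HZ, diagm_mul, trace_diagm. simpl.
    apply rsum_ext. intros i _. unfold c. destruct (Rlt_dec 0 (mu i)) as [Hi|Hi].
    + destruct (Hsq i Hi) as [Hq Hnz]. rewrite <- Hq at 2. field; auto.
    + rewrite sqrt_neg_0; lra.
Qed.

Lemma trace_norm_polar n X W mu : spectral n (mmul n (adj X) X) W mu ->
  exists V, orth_proj n (mmul n V (adj V)) /\ orth_proj n (mmul n (adj V) V) /\
    trace_norm_via n W mu = Cre (trace n (mmul n V X)).
Proof.
  intros Hsp. pose proof Hsp as [HW _]. unfold unitary in HW.
  assert (HZ : Meq n (mmul n (adj (mmul n X W)) (mmul n X W)) (diagm mu)).
  { rewrite <- (spectral_diagonalize n _ W mu Hsp), adj_mmul, !mmul_assoc. reflexivity. }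
  destruct (gram_diagm_partial_isometry n _ mu HZ) as (S & HS1 & HS2 & HStr).
  exists (mmul n W (adj S)).
  split; [|split].
  - assert (E : Meq n (mmul n (mmul n W (adj S)) (adj (mmul n W (adj S))))
                      (mmul n (mmul n W (mmul n (adj S) S)) (adj W))).
    { rewrite adj_mmul, adj_involutive, !mmul_assoc. reflexivity. }
    rewrite E. apply orth_proj_conj; auto.
  - assert (E : Meq n (mmul n (adj (mmul n W (adj S))) (mmul n W (adj S))) (mmul n S (adj S))).
    { rewrite adj_mmul, adj_involutive, mmul_assoc, <- (mmul_assoc n (adj W) W), HW, mmul_idm_l.
      reflexivity. }
    rewrite E. auto.
  - rewrite trace_norm_via_eq by exact HW. rewrite <- HStr.
    rewrite mmul_assoc, (trace_mmul_comm n W), mmul_assoc. reflexivity.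
Qed.

(** * The weighted Cauchy-Schwarz estimate *)

Lemma partial_isometry_conj n U V : Meq n (mmul n U (adj U)) idm ->
  orth_proj n (mmul n V (adj V)) -> orth_proj n (mmul n (adj V) V) ->
  orth_proj n (mmul n (mmul n (mmul n (adj U) V) U) (adj (mmul n (mmul n (adj U) V) U))) /\
  orth_proj n (mmul n (adj (mmul n (mmul n (adj U) V) U)) (mmul n (mmul n (adj U) V) U)).
Proof.
  intros HU HV1 HV2.
  assert (HQ : Meq n (mmul n (adj (adj U)) (adj U)) idm) by (rewrite adj_involutive; exact HU).
  split.
  - assert (E : Meq n (mmul n (mmul n (mmul n (adj U) V) U) (adj (mmul n (mmul n (adj U) V) U)))
                      (mmul n (mmul n (adj U) (mmul n V (adj V))) (adj (adj U)))).
    { rewrite !adj_mmul, !mmul_assoc, <- (mmul_assoc n U (adj U)), HU, mmul_idm_l. reflexivity. }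
    rewrite E. apply orth_proj_conj; auto.
  - assert (E : Meq n (mmul n (adj (mmul n (mmul n (adj U) V) U)) (mmul n (mmul n (adj U) V) U))
                      (mmul n (mmul n (adj U) (mmul n (adj V) V)) (adj (adj U)))).
    { rewrite !adj_mmul, !mmul_assoc, <- (mmul_assoc n (adj (adj U)) (adj U)), HQ, mmul_idm_l,
        !adj_involutive.
      reflexivity. }
    rewrite E. apply orth_proj_conj; auto.
Qed.

Lemma trace_mmul_conj n U A B : Meq n (mmul n U (adj U)) idm ->
  trace n (mmul n A B) =
  trace n (mmul n (mmul n (mmul n (adj U) A) U) (mmul n (mmul n (adj U) B) U)).
Proof.
  intros HU.
  assert (E : Meq n (mmul n (mmul n (mmul n (adj U) A) U) (mmul n (mmul n (adj U) B) U))
                    (mmul n (adj U) (mmul n (mmul n A B) U))).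
  { rewrite !mmul_assoc, <- (mmul_assoc n U (adj U)), HU, mmul_idm_l. reflexivity. }
  rewrite E, (trace_mmul_comm n (adj U)), mmul_assoc, HU, mmul_idm_r. reflexivity.
Qed.

Lemma hs_inner_superop_fun n U m X :
  Cre (hs_inner n X (superop_fun n U m X)) =
  rsum n (fun a => rsum n (fun b =>
    m a b * Cnorm2 (mmul n (mmul n (adj U) X) U a b))).
Proof.
  unfold hs_inner, superop_fun. cbv zeta.
  set (Y := mmul n (mmul n (adj U) X) U).
  set (M := fun i j => Cmul (RtoC (m i j)) (Y i j)).
  assert (E1 : Meq n (mmul n (adj X) (mmul n (mmul n U M) (adj U)))
                     (mmul n (mmul n (mmul n (adj X) U) M) (adj U)))
    by (rewrite !mmul_assoc; reflexivity).
  assert (E2 : Meq n (mmul n (adj U) (mmul n (mmul n (adj X) U) M)) (mmul n (adj Y) M)).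
  { unfold Y. rewrite !adj_mmul, !adj_involutive, !mmul_assoc. reflexivity. }
  rewrite E1, (trace_mmul_comm n _ (adj U)), E2.
  unfold trace, mmul. rewrite Cre_csum, rsum_swap. apply rsum_ext; intros a _.
  rewrite Cre_csum. apply rsum_ext; intros b _. unfold M, adj, Cnorm2. simpl. ring.
Qed.

Lemma sqr_le_of_am_gm t c : 0 <= t -> 0 <= c ->
  (forall s, 0 < s -> 2 * t <= s + c / s) -> Rsqr t <= c.
Proof.
  intros Ht Hc H. unfold Rsqr. destruct (Req_dec t 0) as [->|Ht0]; [lra|].
  specialize (H t ltac:(lra)).
  assert (t <= c / t) by lra.
  apply (Rmult_le_compat_r t) in H0; [|lra].
  replace (c / t * t) with c in H0 by (field; lra). lra.
Qed.

Section Weighted_Cauchy_Schwarz.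

Variables (n : nat) (lam : nat -> R) (T Y : Mat) (K : nat -> nat -> R).
Hypothesis lam_pos : forall a, (a < n)%nat -> 0 < lam a.
Hypothesis lam_sum : rsum n lam = 1.
Hypothesis T_rows : orth_proj n (mmul n T (adj T)).
Hypothesis T_cols : orth_proj n (mmul n (adj T) T).
Hypothesis K_ge : forall a b, (a < n)%nat -> (b < n)%nat -> / ((lam a + lam b) / 2) <= K a b.

Lemma weighted_gram_le1 :
  rsum n (fun a => rsum n (fun b => (lam a + lam b) / 2 * Cnorm2 (T b a))) <= 1.
Proof.
  replace (rsum n (fun a => rsum n (fun b => (lam a + lam b) / 2 * Cnorm2 (T b a)))) with
    (rsum n (fun a => lam a / 2 * rsum n (fun b => Cnorm2 (T b a))) +
     rsum n (fun b => lam b / 2 * rsum n (fun a => Cnorm2 (T b a)))).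
  2:{ rewrite (rsum_ext n (fun b => lam b / 2 * rsum n (fun a => Cnorm2 (T b a)))
                         (fun b => rsum n (fun a => lam b / 2 * Cnorm2 (T b a))))
        by (intros; rewrite rsum_scal; reflexivity).
      rewrite (rsum_swap n n (fun b a => lam b / 2 * Cnorm2 (T b a))), <- rsum_add.
      apply rsum_ext; intros a _. rewrite <- rsum_scal, <- rsum_add.
      apply rsum_ext; intros b _. field. }
  assert (Hcol : rsum n (fun a => lam a / 2 * rsum n (fun b => Cnorm2 (T b a)))
                 <= rsum n (fun a => lam a / 2)).
  { apply rsum_le; intros a Ha. pose proof (lam_pos a Ha).
    pose proof (orth_proj_gram_col_le1 n T a T_cols Ha). nra. }
  assert (Hrow : rsum n (fun b => lam b / 2 * rsum n (fun a => Cnorm2 (T b a)))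
                 <= rsum n (fun b => lam b / 2)).
  { apply rsum_le; intros b Hb. pose proof (lam_pos b Hb).
    pose proof (orth_proj_gram_row_le1 n T b T_rows Hb). nra. }
  assert (rsum n (fun a => lam a / 2) = 1 / 2).
  { rewrite (rsum_ext _ _ (fun a => / 2 * lam a)) by (intros; field). rewrite rsum_scal, lam_sum. field. }
  lra.
Qed.

Lemma two_Re_trace_le s : 0 < s ->
  2 * Cre (trace n (mmul n T Y)) <=
  s + rsum n (fun a => rsum n (fun b => K a b * Cnorm2 (Y a b))) / s.
Proof.
  intros Hs.
  assert (Htr : Cre (trace n (mmul n T Y)) =
                rsum n (fun a => rsum n (fun b => Cre (Cmul (Y a b) (T b a))))).
  { unfold trace, mmul. rewrite Cre_csum, rsum_swap. apply rsum_ext; intros a _.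
    rewrite Cre_csum. apply rsum_ext; intros b _. f_equal. ring. }
  rewrite Htr, <- rsum_scal.
  apply Rle_trans with (rsum n (fun a => rsum n (fun b =>
       s * ((lam a + lam b) / 2 * Cnorm2 (T b a)) + / s * (K a b * Cnorm2 (Y a b))))).
  - apply rsum_le; intros a Ha. rewrite <- rsum_scal. apply rsum_le; intros b Hb.
    pose proof (lam_pos a Ha). pose proof (lam_pos b Hb). pose proof (K_ge a b Ha Hb).
    set (w := (lam a + lam b) / 2).
    assert (Hw : 0 < w) by (unfold w; lra).
    pose proof (two_Re_mul_le (Y a b) (T b a) (s * w) ltac:(apply Rmult_lt_0_compat; lra)).
    assert (Cnorm2 (Y a b) / (s * w) <= / s * (K a b * Cnorm2 (Y a b))).
    { replace (Cnorm2 (Y a b) / (s * w)) with (/ s * (/ w * Cnorm2 (Y a b))) by (field; lra).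
      apply Rmult_le_compat_l; [left; apply Rinv_0_lt_compat; lra|].
      apply Rmult_le_compat_r; [apply Cnorm2_nonneg | auto]. }
    nra.
  - rewrite (rsum_ext _ _ (fun a => s * rsum n (fun b => (lam a + lam b) / 2 * Cnorm2 (T b a)) +
                                     / s * rsum n (fun b => K a b * Cnorm2 (Y a b)))).
    2:{ intros a _. rewrite <- !rsum_scal, <- rsum_add. reflexivity. }
    rewrite rsum_add, !rsum_scal.
    assert (s * rsum n (fun a => rsum n (fun b => (lam a + lam b) / 2 * Cnorm2 (T b a))) <= s * 1)
      by (apply Rmult_le_compat_l; [lra | apply weighted_gram_le1]).
    unfold Rdiv. lra.
Qed.

Lemma Re_trace_sqr_le : 0 <= Cre (trace n (mmul n T Y)) ->
  Rsqr (Cre (trace n (mmul n T Y))) <= rsum n (fun a => rsum n (fun b => K a b * Cnorm2 (Y a b))).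
Proof.
  intros Ht. apply sqr_le_of_am_gm; auto; [|apply two_Re_trace_le].
  apply rsum_nonneg; intros a Ha; apply rsum_nonneg; intros b Hb.
  pose proof (K_ge a b Ha Hb). pose proof (lam_pos a Ha). pose proof (lam_pos b Hb).
  assert (0 < / ((lam a + lam b) / 2)) by (apply Rinv_0_lt_compat; lra).
  apply Rmult_le_pos; [lra | apply Cnorm2_nonneg].
Qed.

End Weighted_Cauchy_Schwarz.

Theorem mainTheorem8 (n : nat) (k : R -> R) (rho sigma U W : Mat)
    (lam mu : nat -> R) :
  (forall x, 0 < x -> 0 < k x) ->
  standard_op_monotone (fun x => / k x) ->
  density n rho -> density n sigma -> posdef n sigma ->
  spectral n sigma U lam ->
  spectral n (mmul n (adj (msub rho sigma)) (msub rho sigma)) W mu ->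
  Rsqr (trace_norm_via n W mu) <= Cre (chi2 n k U lam rho sigma).
Proof.
  intros _ Hg _ [_ Hst] Hpd Hsp Hspw.
  pose proof (spectral_posdef_pos n _ _ _ Hpd Hsp) as Hlam.
  assert (Hsum : rsum n lam = 1)
    by (rewrite (spectral_trace n _ _ _ Hsp) in Hst; injection Hst; auto).
  pose proof (unitary_mmul_adj n U (proj1 Hsp)) as HU.
  destruct (trace_norm_polar n _ W mu Hspw) as (V & HV1 & HV2 & Htn).
  destruct (partial_isometry_conj n U V HU HV1 HV2) as [HT1 HT2].
  assert (Htn0 : 0 <= trace_norm_via n W mu)
    by (rewrite trace_norm_via_eq by apply (proj1 Hspw); apply rsum_nonneg; intros; apply sqrt_pos).
  unfold chi2, Jop_inv. rewrite hs_inner_superop_fun.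
  rewrite Htn, (trace_mmul_conj n U) in Htn0 |- * by exact HU.
  apply (Re_trace_sqr_le n lam); auto.
  intros a b Ha Hb.
  pose proof (Hlam a Ha). pose proof (Hlam b Hb).
  assert (Hx : 0 < lam a / lam b) by (apply Rdiv_lt_0_compat; lra).
  pose proof (standard_op_monotone_le_mean _ Hg _ Hx) as Hmean.
  pose proof (proj1 Hg _ Hx) as Hgx. simpl in Hmean, Hgx.
  apply Rinv_le_contravar; [apply Rmult_lt_0_compat; lra|].
  apply (Rmult_le_compat_r (lam b)) in Hmean; [|lra].
  replace ((1 + lam a / lam b) / 2 * lam b) with ((lam a + lam b) / 2) in Hmean by (field; lra).
  exact Hmean.
Qed.
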